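(* Let $\mathbb{C}$ be a modified category of interest, $\mathcal{X}=(\partial\colon E\to R)$, $\mathcal{X}'=(\partial'\colon E'\to R')$ crossed modules in $\mathbb{C}$, $f=(f_1,f_0)$ and $g=(g_1,g_0)$ crossed module morphisms $\mathcal{X}\to\mathcal{X}'$, and $s$ an $f_0$-derivation connecting $f$ to $g$. Then the map $\bar s\colon R\to E'$, $\bar s(r)=-s(r)$, is a $g_0$-derivation connecting $g$ to $f$.
   Context: A modified category of interest (MCI) is a category $\mathbb{C}$ of groups (written additively) with additional unary and binary operations: $\Omega=\Omega_0\cup\Omega_1\cup\Omega_2$, $\Omega_0=\{0\}$, $\Omega_2'=\Omega_2\setminus\{+\}$ closed under $x*^\circ y=y*x$, with $x*(y+z)=x*y+x*z$, unary operations other than $-$ compatible with $+$ and $*$, $x_1+(x_2*x_3)=(x_2*x_3)+x_1$, and each $(x_1*x_2)\bar*x_3$ expressible as a word in the products $x_i(x_jx_k),(x_jx_k)x_i$, $i\in\{1,2\}$. A derived action of $R$ on $E$ consists of maps $r\cdot e=\sigma(r)+e-\sigma(r)$, $r*e=\sigma(r)*e$ ($*\in\Omega_2'$) induced by a split extension of $R$ by $E$ with section $\sigma$. A crossed module is a morphism $\partial\colon E\to R$ with a derived action satisfying $\partial(r\cdot e)=r+\partial(e)-r$, $\partial(r*e)=r*\partial(e)$, $\partial(e)\cdot e'=e+e'-e$, $\partial(e)*e'=e*e'$. A crossed module morphism $(f_1,f_0)$ satisfies $\partial'f_1=f_0\partial$, $f_1(r\cdot e)=f_0(r)\cdot f_1(e)$,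 $f_1(r*e)=f_0(r)*f_1(e)$. For a morphism $f_0\colon R\to R'$, an $f_0$-derivation is a map $s\colon R\to E'$ with $s(g+h)=\big(f_0(-h)\cdot s(g)\big)+s(h)$ and $s(g*h)=f_0(g)*s(h)+f_0(h)*^\circ s(g)+s(g)*s(h)$ for all $g,h\in R$, $*\in\Omega_2'$. An $f_0$-derivation $s$ connects $f$ to $g$ if $g_0(r)=f_0(r)+\partial'(s(r))$ and $g_1(e)=f_1(e)+s(\partial(e))$ for all $r\in R$, $e\in E$. *)

From Stdlib Require Import List.
Set Implicit Arguments.

(** Signature of a category of groups with operations:
    Omega_0 = {0}, Omega_1 = {-} ∪ Omega_1' (indexed by [unI]),
    Omega_2 = {+} ∪ Omega_2' (indexed by [binI]).  [dual i] is the index of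
    the operation x *° y := y * x, which is again in Omega_2'. *)
Record signature := Signature {
  binI : Type;
  unI : Type;
  dual : binI -> binI
}.

Record alg (S : signature) := Alg {
  car :> Type;
  zero : car;
  add : car -> car -> car;
  opp : car -> car;
  op : binI S -> car -> car -> car;
  un : unI S -> car -> car
}.
Arguments zero {S} a.
Arguments add {S a} _ _.
Arguments opp {S a} _.
Arguments op {S a} _ _ _.
Arguments un {S a} _ _.

(** Letters for axiom 7: products  x_a (x_b x_c)  or  (x_b x_c) x_a  where
    x_a ∈ {x1, x2} and (b, c) is an ordering of the two remaining variables,
    each juxtaposition standing for some operation of Omega_2'. *)
Record letter (S : signature) := Letter {
  l_outer : binI S;
  l_inner : binI S;
  l_left : bool;        (* true: x_a (x_b x_c);  false: (x_b x_c) x_a *)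
  l_x1 : bool;          (* true: x_a = x1;  false: x_a = x2 *)
  l_swap : bool         (* false: (x_b, x_c) = (other, x3); true: (x3, other) *)
}.

Definition eval_letter {S} (A : alg S) (L : letter S) (x1 x2 x3 : A) : A :=
  let xa := if l_x1 L then x1 else x2 in
  let oth := if l_x1 L then x2 else x1 in
  let inner := if l_swap L then op (l_inner L) x3 oth
               else op (l_inner L) oth x3 in
  if l_left L then op (l_outer L) xa inner else op (l_outer L) inner xa.

(** A group word in such letters: a list of signed letters (true = inverted),
    evaluated as the sum from left to right. *)
Definition eval_word {S} (A : alg S) (w : list (bool * letter S))
  (x1 x2 x3 : A) : A :=
  fold_right (fun (sl : bool * letter S) (acc : A) =>
      add (if fst sl then opp (eval_letter A (snd sl) x1 x2 x3)
           else eval_letter A (snd sl) x1 x2 x3) acc) (zero A) w.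

(** A modified category of interest: a signature together with, for every
    pair of operations *, *bar ∈ Omega_2', the word of axiom 7, and the
    remaining identities of the variety (an arbitrary further condition
    [extra] on the algebras). *)
Record MCI := MkMCI {
  msig :> signature;
  word7 : binI msig -> binI msig -> list (bool * letter msig);
  extra : alg msig -> Prop
}.

Definition mci_axioms (C : MCI) (A : alg C) : Prop :=
  (forall x y z : A, add x (add y z) = add (add x y) z) /\
  (forall x : A, add (zero A) x = x) /\
  (forall x : A, add x (zero A) = x) /\
  (forall x : A, add (opp x) x = zero A) /\
  (forall x : A, add x (opp x) = zero A) /\
  (forall (i : binI C) (x y : A), op (dual C i) x y = op i y x) /\
  (forall (i : binI C) (x y z : A), op i x (add y z) = add (op i x y) (op i x z)) /\
  (forall (u : unI C) (x y : A), un u (add x y) = add (un u x) (un u y)) /\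
  (forall (u : unI C) (i : binI C) (x y : A), un u (op i x y) = op i (un u x) y) /\
  (forall (i : binI C) (x1 x2 x3 : A), add x1 (op i x2 x3) = add (op i x2 x3) x1) /\
  (forall (i j : binI C) (x1 x2 x3 : A),
      op j (op i x1 x2) x3 = eval_word A (word7 C i j) x1 x2 x3).

Definition inC (C : MCI) (A : alg C) : Prop := mci_axioms C A /\ extra C A.

Definition is_hom {S} (A B : alg S) (f : A -> B) : Prop :=
  f (zero A) = zero B /\
  (forall x y, f (add x y) = add (f x) (f y)) /\
  (forall x, f (opp x) = opp (f x)) /\
  (forall i x y, f (op i x y) = op i (f x) (f y)) /\
  (forall u x, f (un u x) = un u (f x)).
Arguments is_hom {S A B} f.

Definition split_ext (C : MCI) (R E B : alg C)
  (i : E -> B) (p : B -> R) (sigma : R -> B) : Prop :=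
  inC C B /\ is_hom i /\ is_hom p /\ is_hom sigma /\
  (forall x y, i x = i y -> x = y) /\
  (forall b, p b = zero R <-> exists e, b = i e) /\
  (forall r, p (sigma r) = r).
Arguments split_ext {C R E B} i p sigma.

(** Derived action of R on E:  r·e = sigma(r) + e - sigma(r),
    r * e = sigma(r) * e, induced by some split extension of R by E. *)
Record daction (C : MCI) (R E : alg C) := DAction {
  dot : R -> E -> E;
  dop : binI C -> R -> E -> E
}.
Arguments daction {C} R E.
Arguments dot {C R E} _ _ _.
Arguments dop {C R E} _ _ _ _.

Definition is_derived_action (C : MCI) (R E : alg C) (D : daction R E) : Prop :=
  exists (B : alg C) (i : E -> B) (p : B -> R) (sigma : R -> B),
    split_ext i p sigma /\
    (forall r e, i (dot D r e) = add (add (sigma r) (i e)) (opp (sigma r))) /\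
    (forall k r e, i (dop D k r e) = op k (sigma r) (i e)).
Arguments is_derived_action {C R E} D.

Definition crossed_module (C : MCI) (E R : alg C) (d : E -> R)
  (D : daction R E) : Prop :=
  inC C E /\ inC C R /\ is_hom d /\ is_derived_action D /\
  (forall r e, d (dot D r e) = add (add r (d e)) (opp r)) /\
  (forall k r e, d (dop D k r e) = op k r (d e)) /\
  (forall e e', dot D (d e) e' = add (add e e') (opp e)) /\
  (forall k e e', dop D k (d e) e' = op k e e').
Arguments crossed_module {C E R} d D.

Definition xmod_morphism (C : MCI) (E R E' R' : alg C)
  (d : E -> R) (D : daction R E) (d' : E' -> R') (D' : daction R' E')
  (f1 : E -> E') (f0 : R -> R') : Prop :=
  is_hom f1 /\ is_hom f0 /\
  (forall e, d' (f1 e) = f0 (d e)) /\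
  (forall r e, f1 (dot D r e) = dot D' (f0 r) (f1 e)) /\
  (forall k r e, f1 (dop D k r e) = dop D' k (f0 r) (f1 e)).
Arguments xmod_morphism {C E R E' R'} d D d' D' f1 f0.

Definition derivation (C : MCI) (R R' E' : alg C) (D' : daction R' E')
  (f0 : R -> R') (s : R -> E') : Prop :=
  (forall g h, s (add g h) = add (dot D' (f0 (opp h)) (s g)) (s h)) /\
  (forall k g h, s (op k g h) =
      add (add (dop D' k (f0 g) (s h)) (dop D' (dual C k) (f0 h) (s g)))
          (op k (s g) (s h))).
Arguments derivation {C R R' E'} D' f0 s.

Definition connects (C : MCI) (E R E' R' : alg C)
  (d : E -> R) (d' : E' -> R')
  (f1 : E -> E') (f0 : R -> R') (g1 : E -> E') (g0 : R -> R') (s : R -> E')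
  : Prop :=
  (forall r, g0 r = add (f0 r) (d' (s r))) /\
  (forall e, g1 e = add (f1 e) (s (d e))).
Arguments connects {C E R E' R'} d d' f1 f0 g1 g0 s.

(** Since [g0 r = f0 r + d'(s r)], the Peiffer identities make the action of [g0 r] on
    [E'] conjugation by [s r] followed by the action of [f0 r], and the product action of
    [g0 r] that of [f0 r] plus multiplication by [s r].  Substituting this into the two
    derivation laws of [s], the laws for [-s] reduce to group identities in [E'], using
    [f0 (-h) · s (-h) = -(s h)] and the centrality of products.  The connecting identities
    for [-s] are those for [s] solved for [f]. *)
Set Implicit Arguments.

Definition is_group {S} (A : alg S) : Prop :=
  (forall x y z : A, add x (add y z) = add (add x y) z) /\
  (forall x : A, add (zero A) x = x) /\
  (forall x : A, add x (zero A) = x) /\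
  (forall x : A, add (opp x) x = zero A) /\
  (forall x : A, add x (opp x) = zero A).

Section Group.
Variable S : signature.
Variable A : alg S.
Hypothesis hA : is_group A.

Lemma addA (x y z : A) : add (add x y) z = add x (add y z).
Proof. destruct hA as [h _]; symmetry; apply h. Qed.
Lemma add0g (x : A) : add (zero A) x = x.
Proof. destruct hA as [_ [h _]]; apply h. Qed.
Lemma addg0 (x : A) : add x (zero A) = x.
Proof. destruct hA as [_ [_ [h _]]]; apply h. Qed.
Lemma addNg (x : A) : add (opp x) x = zero A.
Proof. destruct hA as [_ [_ [_ [h _]]]]; apply h. Qed.
Lemma addgN (x : A) : add x (opp x) = zero A.
Proof. destruct hA as [_ [_ [_ [_ h]]]]; apply h. Qed.
Lemma addKg (x y : A) : add (opp x) (add x y) = y.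
Proof. rewrite <- addA, addNg, add0g; reflexivity. Qed.
Lemma addNKg (x y : A) : add x (add (opp x) y) = y.
Proof. rewrite <- addA, addgN, add0g; reflexivity. Qed.
Lemma addI (x y z : A) : add x y = add x z -> y = z.
Proof. intro H. rewrite <- (addKg x y), H, addKg; reflexivity. Qed.
Lemma opp_unique (x y : A) : add x y = zero A -> y = opp x.
Proof. intro H. rewrite <- (addKg x y), H, addg0; reflexivity. Qed.
Lemma opp_unique_l (x y : A) : zero A = add x y -> x = opp y.
Proof. intro H. rewrite <- (addg0 x), <- (addgN y), <- addA, <- H, add0g; reflexivity. Qed.
Lemma oppD (x y : A) : opp (add x y) = add (opp y) (opp x).
Proof. symmetry; apply opp_unique. rewrite addA, addNKg, addgN; reflexivity. Qed.
Lemma oppK (x : A) : opp (opp x) = x.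
Proof. symmetry; apply opp_unique, addNg. Qed.
Lemma opp0 : opp (zero A) = zero A.
Proof. symmetry; apply opp_unique, add0g. Qed.
Lemma idempotent_eq0 (x : A) : add x x = x -> x = zero A.
Proof. intro H. apply (addI x). rewrite H, addg0; reflexivity. Qed.
End Group.

Ltac group_simpl h :=
  repeat progress rewrite ?(addA h), ?(add0g h), ?(addg0 h), ?(addNg h), ?(addgN h),
    ?(addKg h), ?(addNKg h), ?(oppD h), ?(oppK h), ?(opp0 h).

Lemma inC_group (C : MCI) (A : alg C) : inC C A -> is_group A.
Proof. intros [[h1 [h2 [h3 [h4 [h5 _]]]]] _]. repeat split; assumption. Qed.

Section Operations.
Variable C : MCI.
Variable A : alg C.
Hypothesis hA : inC C A.

Lemma op_dual k (x y : A) : op (dual C k) x y = op k y x.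
Proof. destruct hA as [[_ [_ [_ [_ [_ [h _]]]]]] _]. apply h. Qed.
Lemma opD k (x y z : A) : op k x (add y z) = add (op k x y) (op k x z).
Proof. destruct hA as [[_ [_ [_ [_ [_ [_ [h _]]]]]]] _]. apply h. Qed.
Lemma op_central k (x y z : A) : add z (op k x y) = add (op k x y) z.
Proof. destruct hA as [[_ [_ [_ [_ [_ [_ [_ [_ [_ [h _]]]]]]]]]] _]. apply h. Qed.

Lemma op0 k (x : A) : op k x (zero A) = zero A.
Proof.
  apply (idempotent_eq0 (inC_group hA)).
  rewrite <- opD, (add0g (inC_group hA)). reflexivity.
Qed.
Lemma opN k (x y : A) : op k x (opp y) = opp (op k x y).
Proof.
  apply (opp_unique (inC_group hA)).
  rewrite <- opD, (addgN (inC_group hA)), op0. reflexivity.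
Qed.
Lemma opDl k (x y z : A) : op k (add x y) z = add (op k x z) (op k y z).
Proof. rewrite <- (op_dual k z), opD, !op_dual. reflexivity. Qed.
Lemma opNl k (x y : A) : op k (opp x) y = opp (op k x y).
Proof. rewrite <- (op_dual k y), opN, op_dual. reflexivity. Qed.
End Operations.

Section DerivedAction.
Variable C : MCI.
Variables R E : alg C.
Variable D : daction R E.
Hypothesis hD : is_derived_action D.

Ltac unfold_action :=
  destruct hD as [B [i [p [sg [[hB [[_ [iD [iN _]]] [_ [[s0 [sD _]] [inj _]]]]]
    [hdot hdop]]]]]];
  pose proof (inC_group hB) as gB; apply inj.

Lemma dotD r (x y : E) : dot D r (add x y) = add (dot D r x) (dot D r y).
Proof. unfold_action. rewrite iD, !hdot, iD. group_simpl gB. reflexivity. Qed.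
Lemma dotN r (x : E) : dot D r (opp x) = opp (dot D r x).
Proof. unfold_action. rewrite iN, !hdot, iN. group_simpl gB. reflexivity. Qed.
Lemma dot_add (r r' : R) (x : E) : dot D (add r r') x = dot D r (dot D r' x).
Proof. unfold_action. rewrite !hdot, sD. group_simpl gB. reflexivity. Qed.
Lemma dot0 (x : E) : dot D (zero R) x = x.
Proof. unfold_action. rewrite hdot, s0. group_simpl gB. reflexivity. Qed.
Lemma dop_add k (r r' : R) (x : E) : dop D k (add r r') x = add (dop D k r x) (dop D k r' x).
Proof. unfold_action. rewrite iD, !hdop, sD, (opDl hB). reflexivity. Qed.
Lemma dopN k r (x : E) : dop D k r (opp x) = opp (dop D k r x).
Proof. unfold_action. rewrite iN, !hdop, iN, (opN hB). reflexivity. Qed.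
Lemma dop_central k r (x y : E) : add y (dop D k r x) = add (dop D k r x) y.
Proof. unfold_action. rewrite !iD, hdop, (op_central hB). reflexivity. Qed.
End DerivedAction.

Section OppositeDerivation.
Variable C : MCI.
Variables R R' E' : alg C.
Variable D' : daction R' E'.
Variable d' : E' -> R'.
Variables f0 g0 : R -> R'.
Variable s : R -> E'.
Hypothesis hR : inC C R.
Hypothesis hE' : inC C E'.
Hypothesis hD' : is_derived_action D'.
Hypothesis dot_peiffer : forall e e', dot D' (d' e) e' = add (add e e') (opp e).
Hypothesis dop_peiffer : forall k e e', dop D' k (d' e) e' = op k e e'.
Hypothesis f0_zero : f0 (zero R) = zero R'.
Hypothesis s_derivation : derivation D' f0 s.
Hypothesis g0_def : forall r, g0 r = add (f0 r) (d' (s r)).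

Let gR := inC_group hR.
Let gE' := inC_group hE'.

Lemma s_add g h : s (add g h) = add (dot D' (f0 (opp h)) (s g)) (s h).
Proof. apply s_derivation. Qed.

Lemma derivation_zero : s (zero R) = zero E'.
Proof.
  apply (idempotent_eq0 gE'). symmetry.
  rewrite <- (add0g gR (zero R)) at 1.
  rewrite s_add, (opp0 gR), f0_zero, (dot0 hD'). reflexivity.
Qed.

Lemma derivation_opp h : dot D' (f0 (opp h)) (s (opp h)) = opp (s h).
Proof.
  apply (opp_unique_l gE').
  rewrite <- s_add, (addNg gR), derivation_zero. reflexivity.
Qed.

Lemma opp_derivation_add g h :
  opp (s (add g h)) = add (dot D' (g0 (opp h)) (opp (s g))) (opp (s h)).
Proof.
  rewrite s_add, g0_def, (dot_add hD'), dot_peiffer, !(dotD hD'), !(dotN hD'),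
    derivation_opp.
  group_simpl gE'. reflexivity.
Qed.

Lemma opp_derivation_op k g h :
  opp (s (op k g h)) =
  add (add (dop D' k (g0 g) (opp (s h))) (dop D' (dual C k) (g0 h) (opp (s g))))
      (op k (opp (s g)) (opp (s h))).
Proof.
  destruct s_derivation as [_ s_op].
  rewrite s_op, !g0_def, !(dop_add hD'), !(dopN hD'), !dop_peiffer, (op_dual hE'),
    (opN hE'), (opNl hE').
  group_simpl gE'.
  set (a := dop D' k (f0 g) (s h)).
  set (b := dop D' (dual C k) (f0 h) (s g)).
  set (x := op k (s g) (s h)).
  assert (x_central : forall z, add (opp x) z = add z (opp x)).
  { intro z. unfold x. rewrite <- (opN hE'). symmetry. apply (op_central hE'). }
  assert (ab_commute : add (opp b) (opp a) = add (opp a) (opp b)).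
  { rewrite <- !(oppD gE'). unfold a. rewrite (dop_central hD'). reflexivity. }
  rewrite ab_commute, <- (addA gE' (opp a) (opp x) (opp b)), <- (x_central (opp a)),
    (addA gE').
  reflexivity.
Qed.

Lemma opp_derivation : derivation D' g0 (fun r => opp (s r)).
Proof. split; [apply opp_derivation_add | apply opp_derivation_op]. Qed.
End OppositeDerivation.

Lemma connects_opp (C : MCI) (E R E' R' : alg C) (d : E -> R) (d' : E' -> R')
  (f1 g1 : E -> E') (f0 g0 : R -> R') (s : R -> E') :
  is_group E' -> is_group R' -> (forall x, d' (opp x) = opp (d' x)) ->
  connects d d' f1 f0 g1 g0 s ->
  connects d d' g1 g0 f1 f0 (fun r => opp (s r)).
Proof.
  intros gE' gR' d'N [cg0 cg1]. split.
  - intro r. rewrite cg0, d'N. group_simpl gR'. reflexivity.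
  - intro e. rewrite cg1. group_simpl gE'. reflexivity.
Qed.

Theorem mainTheorem3 (C : MCI) (E R E' R' : alg C)
  (d : E -> R) (D : daction R E) (d' : E' -> R') (D' : daction R' E')
  (f1 g1 : E -> E') (f0 g0 : R -> R') (s : R -> E') :
  crossed_module d D ->
  crossed_module d' D' ->
  xmod_morphism d D d' D' f1 f0 ->
  xmod_morphism d D d' D' g1 g0 ->
  derivation D' f0 s ->
  connects d d' f1 f0 g1 g0 s ->
  derivation D' g0 (fun r => opp (s r)) /\
  connects d d' g1 g0 f1 f0 (fun r => opp (s r)).
Proof.
  intros [_ [hR _]] [hE' [hR' [[_ [_ [d'N _]]] [hD' [_ [_ [dot_peiffer dop_peiffer]]]]]]]
    [_ [[f0_zero _] _]] _ s_derivation s_connects.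
  split.
  - exact (opp_derivation d' g0 hR hE' hD' dot_peiffer dop_peiffer f0_zero s_derivation
      (proj1 s_connects)).
  - exact (connects_opp (inC_group hE') (inC_group hR') d'N s_connects).
Qed.
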